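(* Let $G$ be a (nonempty) complete graph whose vertices are each colored $A$, $B$ or $C$. The value of the Normal Partizan Domination game on $G$ is $1$ if every vertex has color $A$, is $-1$ if every vertex has color $B$, and is $*$ otherwise.
   Context: Normal Partizan Domination game: a finite graph $G$ has each vertex colored $A$, $B$ or $C$. Alice and Bob alternately select a vertex; Alice may only select vertices colored $A$ or $C$, Bob only vertices colored $B$ or $C$. A vertex $u$ dominates $v$ if $u=v$ or $uv$ is an edge. A vertex may be selected only if it is playable, i.e. it dominates at least one vertex not dominated by the previously selected vertices; the game ends when the selected vertices form a dominating set. Under normal play the player unable to move loses. The game is regarded as a partizan combinatorial game with Alice as Left and Bob as Right, and its value is its value in Conway's combinatorial game theory ($\{X\mid Y\}$ has Left options $X$ and Right options $Y$; $G=H$ iff $G+(-H)$ is a second-player win). Here $1=\{0\mid\}$, $-1=\{\mid 0\}$, $*=\{0\mid 0\}$, $0=\{\mid\}$. *)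

From mathcomp Require Import all_boot.
Set Implicit Arguments. Unset Strict Implicit. Unset Printing Implicit Defensive.

Inductive game : Type := Game of seq game & seq game.

Definition lopts (g : game) : seq game := let: Game L _ := g in L.
Definition ropts (g : game) : seq game := let: Game _ R := g in R.

Fixpoint gneg (g : game) : game :=
  let: Game L R := g in Game (map gneg R) (map gneg L).

Fixpoint gadd (g : game) : game -> game :=
  fix gadd_g (h : game) : game :=
    match g, h with
    | Game gL gR, Game hL hR =>
        Game ([seq gadd x h | x <- gL] ++ [seq gadd_g y | y <- hL])
             ([seq gadd x h | x <- gR] ++ [seq gadd_g y | y <- hR])
    end.

(** Outcome under normal play: (Left wins moving first, Right wins moving first). *)
Fixpoint outcome (g : game) : bool * bool :=
  let: Game L R := g in
  (has (fun x => ~~ (outcome x).2) L, has (fun x => ~~ (outcome x).1) R).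

Definition second_player_win (g : game) : bool :=
  ~~ (outcome g).1 && ~~ (outcome g).2.

Definition game_eq (g h : game) : bool := second_player_win (gadd g (gneg h)).

Definition g0 : game := Game [::] [::].
Definition g1 : game := Game [:: g0] [::].
Definition gm1 : game := Game [::] [:: g0].
Definition gstar : game := Game [:: g0] [:: g0].

Inductive color := cA | cB | cC.

Definition left_can (c : color) : bool := if c is cB then false else true.
Definition right_can (c : color) : bool := if c is cA then false else true.

Section Domination.
Variables (T : finType) (e : rel T) (col : T -> color).

Definition cnbhd (v : T) : {set T} := [set u | (u == v) || e v u].

(** v is playable when D is the set of already dominated vertices *)
Definition playable (D : {set T}) (v : T) : bool := ~~ (cnbhd v \subset D).

Fixpoint dom_game (n : nat) (D : {set T}) : game :=
  match n with
  | 0 => g0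
  | n'.+1 =>
      Game [seq dom_game n' (D :|: cnbhd v) | v <- enum T & left_can (col v) && playable D v]
           [seq dom_game n' (D :|: cnbhd v) | v <- enum T & right_can (col v) && playable D v]
  end.

(** The game from the start: nothing dominated; fuel #|T| suffices since each
    move dominates at least one new vertex. *)
Definition partizan_domination : game := dom_game #|T| set0.

End Domination.

From mathcomp Require Import all_boot.

(* On a complete graph every closed neighbourhood is the whole vertex set, so
   the first move ends the game: its value is {0,...,0 | 0,...,0}, with one
   left option per vertex Alice may select and one right option per vertex Bob
   may select.  Such a game is 1 when only Left has moves, -1 when only Right
   has moves, and * when both do (each player wins by moving to 0). *)

Definition zeros_game (a b : nat) : game := Game (nseq a g0) (nseq b g0).

Lemma zeros_game_eq1 a b : game_eq (zeros_game a b) g1 = (a != 0) && (b == 0).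
Proof.
rewrite /game_eq /second_player_win /= !map_nseq /= !cats0 !has_cat !has_nseq.
by case: a; case: b.
Qed.

Lemma zeros_game_eqm1 a b : game_eq (zeros_game a b) gm1 = (a == 0) && (b != 0).
Proof.
rewrite /game_eq /second_player_win /= !map_nseq /= !cats0 !has_cat !has_nseq.
by case: a; case: b.
Qed.

Lemma zeros_game_eqstar a b : game_eq (zeros_game a b) gstar = (a != 0) && (b != 0).
Proof.
rewrite /game_eq /second_player_win /= !map_nseq /= !cats0 !has_cat !has_nseq.
by case: a; case: b.
Qed.

Lemma count_enum_eq0 (T : finType) (p : pred T) :
  count p (enum T) = 0 <-> forall v, ~~ p v.
Proof.
split=> [/eqP | p0]; last by apply/eqP; rewrite eqn0Ngt -has_count; apply/hasPn.
by rewrite eqn0Ngt -has_count => /hasPn p0 v; apply: p0; rewrite mem_enum.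
Qed.

Section Domination.
Variables (T : finType) (e : rel T) (col : T -> color).

Lemma count_left_can_eq0 :
  count (left_can \o col) (enum T) = 0 <-> forall v, col v = cB.
Proof.
apply: (iff_trans (count_enum_eq0 _ _)); split=> col_v v /=; last by rewrite col_v.
by move: (col_v v) => /=; case: (col v).
Qed.

Lemma count_right_can_eq0 :
  count (right_can \o col) (enum T) = 0 <-> forall v, col v = cA.
Proof.
apply: (iff_trans (count_enum_eq0 _ _)); split=> col_v v /=; last by rewrite col_v.
by move: (col_v v) => /=; case: (col v).
Qed.

Lemma playable_set0 v : playable e set0 v.
Proof. by apply/subsetPn; exists v; rewrite !inE ?eqxx. Qed.

Lemma playable_setT v : playable e setT v = false.
Proof. by rewrite /playable subsetT. Qed.

Lemma dom_game_setT n : dom_game e col n setT = g0.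
Proof.
case: n => [|n] //=.
by rewrite !(@eq_filter _ _ pred0) ?filter_pred0 // => v; rewrite playable_setT andbF.
Qed.

Hypothesis complete : forall u v : T, u != v -> e u v.

Lemma cnbhd_complete v : cnbhd e v = setT.
Proof.
apply/setP => u; rewrite !inE; case: eqVneq => //= uv.
by apply: complete; rewrite eq_sym.
Qed.

Lemma partizan_domination_complete :
  0 < #|T| ->
  partizan_domination e col =
    zeros_game (count (left_can \o col) (enum T)) (count (right_can \o col) (enum T)).
Proof.
rewrite /partizan_domination /zeros_game; case: #|T| => [|n] // _ /=.
have options (can : color -> bool) :
    [seq dom_game e col n (set0 :|: cnbhd e v) | v <- enum T & can (col v) && playable e set0 v]
    = nseq (count (can \o col) (enum T)) g0.
  rewrite -size_filter (@eq_filter _ _ (can \o col)) => [|v]; last first.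
    by rewrite playable_set0 andbT.
  elim: [seq v <- enum T | (can \o col) v] => //= v s ->.
  by rewrite cnbhd_complete set0U dom_game_setT.
by rewrite !options.
Qed.

End Domination.

Theorem proposition3 (T : finType) (e : rel T) (col : T -> color) :
  0 < #|T| ->
  symmetric e -> irreflexive e ->
  (forall u v : T, u != v -> e u v) ->
  [/\ (forall v, col v = cA) -> game_eq (partizan_domination e col) g1,
      (forall v, col v = cB) -> game_eq (partizan_domination e col) gm1 &
      ~ (forall v, col v = cA) -> ~ (forall v, col v = cB) ->
        game_eq (partizan_domination e col) gstar].
Proof.
move=> T_gt0 _ _ complete; have [x0 _] := card_gt0P T_gt0.
rewrite partizan_domination_complete // zeros_game_eq1 zeros_game_eqm1 zeros_game_eqstar.
split=> [allA | allB | notA notB]; apply/andP; split; apply/eqP.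
- by move/count_left_can_eq0/(_ x0); rewrite allA.
- exact/count_right_can_eq0.
- exact/count_left_can_eq0.
- by move/count_right_can_eq0/(_ x0); rewrite allB.
- by move/count_left_can_eq0.
- by move/count_right_can_eq0.
Qed.
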